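(* Let $H$ be a finite simple graph on vertex set $\{x_1,\dots,x_n\}$ ($n\ge 1$) and let $G=w(H)$ be its whiskered graph, a graph on $2n$ vertices. Then the independence complex $\operatorname{Ind}(G)$ is a pseudo-manifold (of dimension $n-1$). Moreover, if $|E(G)|\ge n+1$ (equivalently, $H$ has at least one edge), then $\operatorname{Ind}(G)$ is a pseudo-manifold with boundary.
   Context: All graphs are finite and simple. For a graph $H$ with vertex set $\{x_1,\dots,x_n\}$, the whiskered graph $w(H)$ has vertex set $\{x_1,\dots,x_n,y_1,\dots,y_n\}$ and edge set $E(H)\cup\{\{x_i,y_i\}: i=1,\dots,n\}$; a graph is called whiskered if it equals $w(H)$ for some graph $H$. A subset $W$ of the vertex set of a graph is independent if no edge has both endpoints in $W$; the independence complex $\operatorname{Ind}(G)$ is the simplicial complex whose faces are the independent sets of $G$. A face $F$ has dimension $|F|-1$; facets are maximal faces; a complex is pure if all facets have the same dimension. A $d$-dimensional simplicial complex $\Delta$ is a pseudo-manifold if (1) $\Delta$ is pure; (2) every $(d-1)$-dimensional face is contained in at most two facets; (3) for any two facets $F,F'$ there is a sequence of facets $F=G_0,G_1,\dots,G_t=F'$ with $\dim(G_i\cap G_{i+1})=d-1$ for all $i$. A pseudo-manifold has boundary if at least one $(d-1)$-dimensional face is contained in exactly one facet. *)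

From mathcomp Require Import all_boot.
Set Implicit Arguments. Unset Strict Implicit. Unset Printing Implicit Defensive.

Definition simple_graph (V : finType) (e : rel V) : Prop :=
  symmetric e /\ irreflexive e.

Definition edge_set (V : finType) (e : rel V) : {set {set V}} :=
  [set [set x; y] | x in V, y in V & e x y].

(* Whiskered graph w(H): vertices x_i = inl i, y_i = inr i. *)
Definition whisker (n : nat) (e : rel 'I_n) : rel ('I_n + 'I_n) :=
  fun u v =>
    match u, v with
    | inl i, inl j => e i j
    | inl i, inr j => i == j
    | inr i, inl j => i == j
    | inr _, inr _ => false
    end.

Definition independent (V : finType) (e : rel V) (W : {set V}) : bool :=
  [forall x in W, forall y in W, ~~ e x y].

Definition Ind (V : finType) (e : rel V) : {set {set V}} :=
  [set W | independent e W].

Definition facet (V : finType) (D : {set {set V}}) (F : {set V}) : bool :=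
  (F \in D) && [forall G in D, (F \subset G) ==> (G == F)].

(* Two facets are adjacent if their intersection has dimension d-1,
   i.e. cardinality d, in a d-dimensional complex. *)
Definition facet_adj (V : finType) (D : {set {set V}}) (d : nat) : rel {set V} :=
  fun F F' => [&& facet D F, facet D F' & #|F :&: F'| == d].

(* A d-dimensional pseudo-manifold (dimension of a face F is #|F| - 1). *)
Definition pseudo_manifold (V : finType) (D : {set {set V}}) (d : nat) : Prop :=
  (exists2 F, F \in D & #|F| = d.+1) /\
  (forall F, F \in D -> #|F| <= d.+1) /\
  (forall F, facet D F -> #|F| = d.+1) /\
  (forall G, G \in D -> #|G| = d ->
     #|[set F | facet D F & G \subset F]| <= 2) /\
  (forall F F', facet D F -> facet D F' ->
     exists2 s : seq {set V}, path (facet_adj D d) F s & last F s = F').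

Definition has_boundary (V : finType) (D : {set {set V}}) (d : nat) : Prop :=
  exists2 G, G \in D & (#|G| = d /\ #|[set F | facet D F & G \subset F]| = 1).

Definition pseudo_manifold_with_boundary (V : finType) (D : {set {set V}}) (d : nat) : Prop :=
  pseudo_manifold D d /\ has_boundary D d.

From mathcomp Require Import all_boot.
Set Implicit Arguments. Unset Strict Implicit. Unset Printing Implicit Defensive.

(* Write x_i = inl i and y_i = inr i.  Since x_i y_i is an edge, an
   independent set W of w(H) meets each whisker {x_i, y_i} at most once, so
   the index map W -> 'I_n is injective and #|W| <= n.  A maximal W meets
   every whisker (otherwise y_i could be added), hence the facets are exactly
   the independent sets of size n: the complex is pure of dimension n - 1.
   A codimension-one face G misses exactly one index k, and a facet above G
   is G + x_k or G + y_k: at most two facets.  Swapping x_i for y_i in a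
   facet yields an adjacent facet, so every facet is joined to the facet
   Y = {y_1, ..., y_n} by induction on its number of x-vertices; this is
   strong connectivity.  Finally, if x_i x_j is an edge of H, the ridge
   (Y - {y_i, y_j}) + x_i lies only in the facet (Y - {y_i}) + x_i, since
   x_j is excluded by x_i: this is a boundary ridge.  Having an edge of H
   is forced by #|E(w(H))| >= n + 1, as the whiskers contribute only n. *)

Lemma independentP (V : finType) (e : rel V) (W : {set V}) :
  reflect (forall x y, x \in W -> y \in W -> ~~ e x y) (W \in Ind e).
Proof.
rewrite inE; apply: (iffP forallP) => [indW x y xW yW | indW x].
  by move/implyP: (indW x) => /(_ xW) /forallP /(_ y) /implyP /(_ yW).
by apply/implyP => xW; apply/forallP => y; apply/implyP => yW; apply: indW.
Qed.

Lemma Ind_sub (V : finType) (e : rel V) (W W' : {set V}) :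
  W \subset W' -> W' \in Ind e -> W \in Ind e.
Proof.
move=> /subsetP sWW' /independentP indW'; apply/independentP => x y xW yW.
by apply: indW'; apply: sWW'.
Qed.

Lemma facet_adj_sym (V : finType) (D : {set {set V}}) (d : nat) :
  symmetric (facet_adj D d).
Proof. by move=> A B; rewrite /facet_adj setIC andbCA. Qed.

Section Whiskered.

Variables (n : nat) (e : rel 'I_n).

Local Notation Delta := (Ind (whisker e)).

Definition whisker_index (v : 'I_n + 'I_n) : 'I_n :=
  match v with inl i => i | inr i => i end.

Definition tips : {set 'I_n + 'I_n} := [set v | if v is inr _ then true else false].

Definition base_part (W : {set 'I_n + 'I_n}) : {set 'I_n + 'I_n} :=
  [set v in W | if v is inl _ then true else false].

Lemma whisker_index_inj (W : {set 'I_n + 'I_n}) :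
  W \in Delta -> {in W &, injective whisker_index}.
Proof.
move/independentP => indW [i|i] [j|j] iW jW /= eq_ij; subst j => //;
  by have := indW _ _ iW jW; rewrite /= eqxx.
Qed.

(* A face has at most n vertices, one per whisker. *)
Lemma face_card (W : {set 'I_n + 'I_n}) : W \in Delta -> #|W| <= n.
Proof.
move=> WI; rewrite -(card_in_imset (whisker_index_inj WI)).
by apply: leq_trans (max_card _) _; rewrite card_ord.
Qed.

Lemma covering_face_card (W : {set 'I_n + 'I_n}) :
  W \in Delta -> (forall i, (inl i \in W) || (inr i \in W)) -> #|W| = n.
Proof.
move=> WI cover; rewrite -(card_in_imset (whisker_index_inj WI)).
suff -> : whisker_index @: W = setT by rewrite cardsT card_ord.
apply/setP => i; rewrite inE; case/orP: (cover i) => h.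
  by apply/imsetP; exists (inl i).
by apply/imsetP; exists (inr i).
Qed.

(* The tip y_i is adjacent only to x_i, so it can be added to any face
   avoiding x_i. *)
Lemma add_tip (W : {set 'I_n + 'I_n}) i :
  W \in Delta -> inl i \notin W -> inr i |: W \in Delta.
Proof.
move=> WI xiW; apply/independentP => x y.
rewrite !inE => /orP [/eqP->|xW] /orP [/eqP->|yW] //.
- by case: y yW => [j|j] //= jW; apply/eqP => eq_ij; subst j; rewrite jW in xiW.
- by case: x xW => [j|j] //= jW; apply/eqP => eq_ij; subst j; rewrite jW in xiW.
- by move/independentP: WI; apply.
Qed.

Lemma facet_cover (F : {set 'I_n + 'I_n}) :
  facet Delta F -> forall i, (inl i \in F) || (inr i \in F).
Proof.
case/andP => FI /forallP maxF i; apply/negPn/negP; rewrite negb_or.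
case/andP => xiF yiF.
have := maxF (inr i |: F); rewrite (add_tip FI xiF) subsetUr /= => /eqP yiF_eq.
by move: yiF; rewrite -yiF_eq setU11.
Qed.

Lemma facetP (F : {set 'I_n + 'I_n}) :
  facet Delta F <-> F \in Delta /\ #|F| = n.
Proof.
split => [fF | [FI cardF]].
  by case/andP: (fF) => FI _; split; last exact: covering_face_card (facet_cover fF).
apply/andP; split => //; apply/forallP => G; apply/implyP => GI.
by apply/implyP => sFG; rewrite eq_sym eqEcard sFG cardF (face_card GI).
Qed.

Lemma facet_card (F : {set 'I_n + 'I_n}) : facet Delta F -> #|F| = n.
Proof. by case/facetP. Qed.

Lemma tips_facet : facet Delta tips.
Proof.
have tipsI : tips \in Delta by apply/independentP => [[a|a] [b|b]]; rewrite !inE.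
by apply/facetP; split; last by apply: covering_face_card => // i; rewrite !inE orbT.
Qed.

Lemma facet_delete_card (F : {set 'I_n + 'I_n}) v :
  facet Delta F -> v \in F -> #|F :\ v| = n.-1.
Proof.
move=> fF vF; have := facet_card fF; rewrite (cardsD1 v F) vF add1n.
by move/(congr1 predn).
Qed.

(* A ridge lies in at most two facets: the index k it misses must be
   completed by x_k or by y_k. *)
Lemma ridge_facets (G : {set 'I_n + 'I_n}) :
  0 < n -> G \in Delta -> #|G| = n.-1 ->
  #|[set F | facet Delta F & G \subset F]| <= 2.
Proof.
move=> n_gt0 GI cardG.
have : 0 < #|~: (whisker_index @: G)|.
  have := cardsC (whisker_index @: G).
  rewrite card_ord (card_in_imset (whisker_index_inj GI)) cardG => split_n.
  by rewrite -(ltn_add2l n.-1) addn0 split_n prednK.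
rewrite card_gt0 => /set0Pn [k]; rewrite inE => kG.
have facets_above : [set F | facet Delta F & G \subset F] \subset
                    [set inl k |: G; inr k |: G].
  apply/subsetP => F; rewrite !inE => /andP [fF sGF].
  have [w wF wk] : exists2 w, w \in F & whisker_index w = k.
    by case/orP: (facet_cover fF k) => h; [exists (inl k) | exists (inr k)].
  have wG : w \notin G by apply: contra kG => wG; apply/imsetP; exists w.
  have /eqP <- : w |: G == F.
    by rewrite eqEcard subUset sub1set wF sGF (facet_card fF) cardsU1 wG cardG /=
      add1n prednK.
  by case: w wk {wF wG} => a /= ->; rewrite eqxx ?orbT.
apply: leq_trans (subset_leq_card facets_above) _.
by rewrite cards2; case: (_ != _).
Qed.

Lemma swap_facet (F : {set 'I_n + 'I_n}) i :
  facet Delta F -> inl i \in F ->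
  let F' := inr i |: (F :\ inl i) in
  [/\ facet Delta F', facet_adj Delta n.-1 F F'
    & base_part F' = base_part F :\ inl i].
Proof.
move=> fF xiF F'; have [FI cardF] : F \in Delta /\ #|F| = n by apply/facetP.
have yiF : inr i \notin F.
  by apply/negP => yiF; move/independentP: FI => /(_ _ _ xiF yiF); rewrite /= eqxx.
have yiFD : inr i \notin F :\ inl i by rewrite !inE negb_and yiF orbT.
have fF' : facet Delta F'.
  apply/facetP; split.
    by apply: add_tip; [exact: Ind_sub (subsetDl _ _) FI | rewrite setD11].
  by apply: etrans cardF; rewrite cardsU1 yiFD (cardsD1 (inl i) F) xiF.
have meet : F :&: F' = F :\ inl i.
  apply/setP => x; rewrite !inE; case: (x =P inl i) => [->|_]; rewrite ?andbF //=.
  by case: (x =P inr i) => [->|] /=; rewrite ?(negbTE yiF) ?andbb.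
split => //; first by rewrite /facet_adj fF fF' meet (facet_delete_card fF xiF) eqxx.
by apply/setP => -[a|a]; rewrite !inE /= ?andbT ?andbF.
Qed.

Lemma connect_tips (F : {set 'I_n + 'I_n}) :
  facet Delta F -> connect (facet_adj Delta n.-1) F tips.
Proof.
move: {2}#|base_part F| (leqnn #|base_part F|) => m.
elim: m F => [|m IH] F cardB fF.
  have -> // : F = tips.
  apply/eqP; rewrite eqEcard (facet_card fF) (facet_card tips_facet) leqnn andbT.
  apply/subsetP => -[a|a] aF; rewrite inE //.
  have : inl a \in base_part F by rewrite inE aF.
  by move: cardB; rewrite leqn0 cards_eq0 => /eqP ->; rewrite inE.
case: (set_0Vmem (base_part F)) => [emptyB|[v]].
  by apply: IH fF; rewrite emptyB cards0.
rewrite inE => /andP [vF]; case: v vF => // i xiF _.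
have [fF' adjFF' baseF'] := swap_facet fF xiF.
apply: connect_trans (connect1 adjFF') (IH _ _ fF').
have xiB : inl i \in base_part F by rewrite inE xiF.
by move: cardB; rewrite baseF' (cardsD1 (inl i)) xiB add1n ltnS.
Qed.

Lemma facets_strongly_connected (F F' : {set 'I_n + 'I_n}) :
  facet Delta F -> facet Delta F' ->
  exists2 s : seq {set 'I_n + 'I_n}, path (facet_adj Delta n.-1) F s & last F s = F'.
Proof.
move=> fF fF'.
have : connect (facet_adj Delta n.-1) F F'.
  apply: connect_trans (connect_tips fF) _.
  by rewrite (sym_connect_sym (@facet_adj_sym _ _ _)); apply: connect_tips.
by case/connectP => s pathFs ->; exists s.
Qed.

Theorem Ind_whisker_pseudo_manifold : 0 < n -> pseudo_manifold Delta n.-1.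
Proof.
move=> n_gt0; rewrite /pseudo_manifold prednK //.
split; first by exists tips; case/facetP: tips_facet.
split; first exact: face_card.
split; first exact: facet_card.
split; first by move=> G GI cardG; apply: ridge_facets.
exact: facets_strongly_connected.
Qed.

(* Beyond the n whisker edges, w(H) has an edge only if H does. *)
Lemma edge_of_many_edges :
  n.+1 <= #|edge_set (whisker e)| -> exists i j, e i j.
Proof.
case: (pickP (fun p : 'I_n * 'I_n => e p.1 p.2)) => [[i j] /= eij _|no_edge].
  by exists i, j.
have only_whiskers : edge_set (whisker e) \subset
    [set [set (inl i : 'I_n + 'I_n); inr i] | i in 'I_n].
  apply/subsetP => S /imset2P [x y _]; rewrite inE => wxy ->.
  case: x y wxy => a [b|b] //= h.
  - by have := no_edge (a, b); rewrite /= h.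
  - by move/eqP: h => <-; apply/imsetP; exists a.
  - by move/eqP: h => <-; apply/imsetP; exists a => //; rewrite setUC.
move=> many; have := leq_trans many (subset_leq_card only_whiskers).
by rewrite ltnNge (leq_trans (leq_imset_card _ _)) // card_ord.
Qed.

Lemma Ind_whisker_boundary i j :
  simple_graph e -> e i j -> has_boundary Delta n.-1.
Proof.
move=> [sym irr] eij.
have ij : i != j by apply: contraTneq eij => ->; rewrite irr.
set F0 : {set 'I_n + 'I_n} := inl i |: (tips :\ inr i).
have F0I : F0 \in Delta.
  apply/independentP => -[a|a] [b|b]; rewrite !inE //= ?orbF.
  - by move=> /eqP[->] /eqP[->]; rewrite irr.
  - by move=> /eqP[->] /andP [nb _]; apply: contra nb => /eqP->.
  - by move=> /andP [na _] /eqP[->]; rewrite eq_sym; apply: contra na => /eqP->.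
have fF0 : facet Delta F0.
  apply/facetP; split => //; apply: covering_face_card => // l; rewrite !inE.
  case: (l =P i) => [->|/eqP li]; rewrite ?eqxx //=.
  by apply/orP; right; rewrite andbT; apply: contra li => /eqP[->].
have yjF0 : inr j \in F0.
  by rewrite !inE /= andbT; apply/eqP => -[] /eqP; rewrite eq_sym (negbTE ij).
exists (F0 :\ inr j); first exact: Ind_sub (subsetDl _ _) F0I.
split; first exact: facet_delete_card.
suff -> : [set F | facet Delta F & F0 :\ inr j \subset F] = [set F0] by rewrite cards1.
apply/setP => F; rewrite !inE; apply/andP/eqP => [[fF sF]|->]; last first.
  by rewrite fF0 subsetDl.
have xiF : inl i \in F by apply: (subsetP sF); rewrite !inE /= eqxx.
have yjF : inr j \in F.
  case/orP: (facet_cover fF j) => // xjF.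
  by case/andP: fF => /independentP /(_ _ _ xiF xjF); rewrite /= eij.
apply/eqP; rewrite eq_sym eqEcard (facet_card fF) (facet_card fF0) leqnn andbT.
by rewrite -(setD1K yjF0) subUset sub1set yjF sF.
Qed.

End Whiskered.

Theorem theorem3p1 (n : nat) (e : rel 'I_n) :
  0 < n -> simple_graph e ->
  pseudo_manifold (Ind (whisker e)) n.-1 /\
  (n.+1 <= #|edge_set (whisker e)| ->
     pseudo_manifold_with_boundary (Ind (whisker e)) n.-1).
Proof.
move=> n_gt0 simple_e.
have PM := Ind_whisker_pseudo_manifold e n_gt0.
split => // many_edges; split => //.
have [i [j eij]] := edge_of_many_edges many_edges.
exact: Ind_whisker_boundary simple_e eij.
Qed.
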